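(* Let $\Delta$ be a local derivation of $\mathcal{S}$ with $\Delta(L_0)=\Delta(L_1)=0$. Then $\Delta(G_0)=0$.
   Context: $\mathcal{S}$ is the centerless super Virasoro algebra: the Lie superalgebra over $\mathbb{C}$ with basis $\{L_m,G_n: m,n\in\mathbb{Z}\}$, $L_m$ even, $G_n$ odd, and brackets $[L_m,L_n]=(m-n)L_{m+n}$, $[L_m,G_r]=(\frac m2-r)G_{m+r}$, $[G_r,G_s]=2L_{r+s}$. A homogeneous linear map $D$ of parity $|D|$ is a derivation if $D([x,y])=[D(x),y]+(-1)^{|D||x|}[x,D(y)]$ for homogeneous $x,y$; derivations are sums of even and odd ones. A linear map $\Delta:\mathcal{S}\to\mathcal{S}$ is a local derivation if for every $x$ there is a derivation $D_x$ with $\Delta(x)=D_x(x)$. *)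

From mathcomp Require Import all_boot all_algebra.
From mathcomp Require Import complex.
From mathcomp Require Import reals Rstruct.
From mathcomp Require Import finmap monalg.
Set Implicit Arguments. Unset Strict Implicit. Unset Printing Implicit Defensive.
Import GRing.Theory.
Local Open Scope ring_scope.

Definition C : numClosedFieldType := (Rdefinitions.R)[i].

(* Finitely supported families Z -> C, i.e. the span of symbols indexed by Z. *)
Definition Fam := {malg C[int]}.

(* The centerless super Virasoro algebra S = S_0 (+) S_1 as a vector space:
   first component = even part (span of the L_m), second = odd part (span of G_n). *)
Definition S : lmodType C := (Fam * Fam)%type.

Definition L (m : int) : S := (<< m >>, 0).
Definition G (n : int) : S := (0, << n >>).

(* Bilinear extension of the brackets
   [L_m,L_n]=(m-n)L_{m+n}, [L_m,G_r]=(m/2-r)G_{m+r}, [G_r,L_m]=-(m/2-r)G_{m+r},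
   [G_r,G_s]=2L_{r+s}. *)
Definition bracket (x y : S) : S :=
  ( \sum_(m <- msupp x.1) \sum_(n <- msupp y.1)
        << (x.1@_m * y.1@_n * (m - n)%:~R) *g (m + n) >>
    + \sum_(r <- msupp x.2) \sum_(s <- msupp y.2)
        << (x.2@_r * y.2@_s * 2) *g (r + s) >>
  , \sum_(m <- msupp x.1) \sum_(r <- msupp y.2)
        << (x.1@_m * y.2@_r * (m%:~R / 2 - r%:~R)) *g (m + r) >>
    - \sum_(r <- msupp x.2) \sum_(m <- msupp y.1)
        << (x.2@_r * y.1@_m * (m%:~R / 2 - r%:~R)) *g (m + r) >> ).

(* homogeneity: parity false = even, true = odd *)
Definition homog (p : bool) (x : S) : Prop :=
  if p then x.1 = 0 else x.2 = 0.

Definition is_linear (f : S -> S) : Prop :=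
  forall (k : C) (u v : S), f (k *: u + v) = k *: f u + f v.

Definition is_homog_map (p : bool) (D : S -> S) : Prop :=
  forall (q : bool) (x : S), homog q x -> homog (p (+) q) (D x).

Definition is_homog_derivation (p : bool) (D : S -> S) : Prop :=
  [/\ is_linear D, is_homog_map p D &
      forall (q r : bool) (x y : S), homog q x -> homog r y ->
        D (bracket x y) = bracket (D x) y + (-1) ^+ (p && q) *: bracket x (D y)].

Definition is_derivation (D : S -> S) : Prop :=
  exists D0 D1 : S -> S,
    [/\ is_homog_derivation false D0, is_homog_derivation true D1 &
        forall x, D x = D0 x + D1 x].

Definition is_local_derivation (Delta : S -> S) : Prop :=
  is_linear Delta /\
  forall x : S, exists D : S -> S, is_derivation D /\ Delta x = D x.

(* Every derivation D = D_0 + D_1 of S satisfies the Leibniz rule on brackets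
   [L_i, y] (L_i is even), so comparing coefficients in [L_0, y] shows that
   off the diagonal D(L_m) and D(G_m) are determined by A = D(L_0); a few
   more Leibniz identities around degree 0 relate D(G_0), D(G_1) and D(L_1).
   For the local derivation, Delta agrees on a x + y (x with Delta x = 0)
   with some derivation D; choosing a as either square root of a suitable
   number, the two resulting relations force single coefficients of Delta(G_0)
   and Delta(G_1) to vanish.  Testing on t G_1 + G_0 (using that A has finite
   support) gives an identity quadratic in t, which identifies the remaining
   L_0-coefficient of Delta(G_0) with the L_1-coefficient of Delta(G_1),
   and the latter vanishes. *)

From mathcomp Require Import all_boot all_algebra.
From mathcomp Require Import complex reals Rstruct finmap monalg.
From mathcomp Require Import ring zify.
Local Open Scope ring_scope.
Import GRing.Theory Num.Theory.

Definition cL (n : int) (y : S) : C := y.1@_n.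
Definition cG (n : int) (y : S) : C := y.2@_n.

Lemma S_ext (x y : S) :
  (forall n, cL n x = cL n y) -> (forall n, cG n x = cG n y) -> x = y.
Proof. by case: x => x1 x2; case: y => y1 y2 /= H1 H2; congr pair; apply/malgP. Qed.

Lemma cLD n (u w : S) : cL n (u + w) = cL n u + cL n w. Proof. exact: mcoeffD. Qed.
Lemma cGD n (u w : S) : cG n (u + w) = cG n u + cG n w. Proof. exact: mcoeffD. Qed.
Lemma cLZ n k (u : S) : cL n (k *: u) = k * cL n u. Proof. exact: mcoeffZ. Qed.
Lemma cGZ n k (u : S) : cG n (k *: u) = k * cG n u. Proof. exact: mcoeffZ. Qed.
Lemma cL_lincomb n a (u v : S) : cL n (a *: u + v) = a * cL n u + cL n v.
Proof. by rewrite cLD cLZ. Qed.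
Lemma cG_lincomb n a (u v : S) : cG n (a *: u + v) = a * cG n u + cG n v.
Proof. by rewrite cGD cGZ. Qed.
Lemma cL0 n : cL n 0 = 0. Proof. exact: mcoeff0. Qed.
Lemma cG0 n : cG n 0 = 0. Proof. exact: mcoeff0. Qed.
Lemma cLL n m : cL n (L m) = (m == n)%:R. Proof. exact: mcoeffU. Qed.
Lemma cGL n m : cG n (L m) = 0. Proof. exact: mcoeff0. Qed.
Lemma cLG n m : cL n (G m) = 0. Proof. exact: mcoeff0. Qed.
Lemma cGG n m : cG n (G m) = (m == n)%:R. Proof. exact: mcoeffU. Qed.

Lemma mcoeff_shift_sum (p : Fam) (F f : int -> C) (h : int -> int) (k n : int) :
  (forall a, F a = p@_a * f a) -> (forall a, h a = a + k) ->
  (\sum_(a <- msupp p) << F a *g h a >>)@_n = p@_(n - k) * f (n - k).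
Proof.
move=> eF eh; rewrite raddf_sum /=.
under eq_bigr => a _ do rewrite eF eh mcoeffU mulrb.
rewrite -big_mkcond /=.
under eq_bigl => a do rewrite -(inj_eq (addIr (- k))) addrK.
case: (boolP (n - k \in msupp p)) => Hin; first by rewrite (fbig_pred1_inj (k := id)).
rewrite big1_seq ?(mcoeff_outdom Hin) ?mul0r // => a /andP [/eqP -> Ha].
by rewrite Ha in Hin.
Qed.

Lemma msupp_unit (m : int) : msupp (<< m >> : Fam) = [fset m]%fset.
Proof. by rewrite msuppU oner_eq0. Qed.

(* An opaque copy of the bracket: its only interface is the coefficient
   formulas below, which keeps the big sums of [bracket] from unfolding. *)
Fact br_key : unit. Proof. by []. Qed.
Definition br := locked_with br_key bracket.
Lemma br_def : br = bracket. Proof. exact: locked_withE. Qed.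

Lemma big_inner_fset0 (s : seq int) (F : int -> int -> Fam) :
  \sum_(a <- s) \sum_(b <- (fset0 : {fset int})) F a b = 0.
Proof. by rewrite big1 // => a _; rewrite big_seq_fset0. Qed.
Lemma big_inner_fset1 (s : seq int) (F : int -> int -> Fam) m :
  \sum_(a <- s) \sum_(b <- [fset m]%fset) F a b = \sum_(a <- s) F a m.
Proof. by apply: eq_bigr => a _; rewrite big_seq_fset1. Qed.

Ltac unfold_br :=
  rewrite br_def /bracket /L /G /cL /cG /=;
  rewrite ?msupp0 ?msupp_unit ?big_inner_fset0 ?big_inner_fset1;
  rewrite ?big_seq_fset0 ?big_seq_fset1 ?mcoeffUU ?mcoeffD ?mcoeffN ?mcoeff0;
  rewrite ?oppr0 ?addr0 ?add0r ?subr0 ?sub0r.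

Ltac shift_sum f k :=
  rewrite (@mcoeff_shift_sum _ _ f _ k) //;
  by move=> ?; rewrite ?mulr1 ?mul1r // addrC.

(* The coefficients of a bracket with a basis element, in the shifted form
   n = k + m that is convenient for instantiating indices. *)
Lemma cL_yL y m n k : n - m = k -> cL n (br y (L m)) = cL k y * (k - m)%:~R.
Proof. by move<-; unfold_br; shift_sum (fun a => (a - m)%:~R : C) m. Qed.
Lemma cG_yL y m n k : n - m = k ->
  cG n (br y (L m)) = - (cG k y * (m%:~R / 2 - k%:~R)).
Proof. by move<-; unfold_br; shift_sum (fun a => m%:~R / 2 - a%:~R : C) m. Qed.
Lemma cL_yG y s n k : n - s = k -> cL n (br y (G s)) = cG k y * 2.
Proof. by move<-; unfold_br; shift_sum (fun _ : int => 2 : C) s. Qed.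
Lemma cG_yG y s n k : n - s = k -> cG n (br y (G s)) = cL k y * (k%:~R / 2 - s%:~R).
Proof. by move<-; unfold_br; shift_sum (fun a => a%:~R / 2 - s%:~R : C) s. Qed.
Lemma cL_Ly m y n k : n - m = k -> cL n (br (L m) y) = cL k y * (m - k)%:~R.
Proof. by move<-; unfold_br; shift_sum (fun a => (m - a)%:~R : C) m. Qed.
Lemma cG_Ly m y n k : n - m = k -> cG n (br (L m) y) = cG k y * (m%:~R / 2 - k%:~R).
Proof. by move<-; unfold_br; shift_sum (fun a => m%:~R / 2 - a%:~R : C) m. Qed.
Lemma cL_Gy r y n k : n - r = k -> cL n (br (G r) y) = cG k y * 2.
Proof. by move<-; unfold_br; shift_sum (fun _ : int => 2 : C) r. Qed.
Lemma cG_Gy r y n k : n - r = k ->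
  cG n (br (G r) y) = - (cL k y * (k%:~R / 2 - r%:~R)).
Proof. by move<-; unfold_br; shift_sum (fun a => a%:~R / 2 - r%:~R : C) r. Qed.

Lemma brDl_L (u w : S) m : br (u + w) (L m) = br u (L m) + br w (L m).
Proof.
apply: S_ext => n;
  rewrite ?cLD ?cGD ?(cL_yL _ _ _ _ erefl) ?(cG_yL _ _ _ _ erefl) ?cLD ?cGD; ring.
Qed.
Lemma brDl_G (u w : S) m : br (u + w) (G m) = br u (G m) + br w (G m).
Proof.
apply: S_ext => n;
  rewrite ?cLD ?cGD ?(cL_yG _ _ _ _ erefl) ?(cG_yG _ _ _ _ erefl) ?cLD ?cGD; ring.
Qed.
Lemma brDr_L (u w : S) m : br (L m) (u + w) = br (L m) u + br (L m) w.
Proof.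
apply: S_ext => n;
  rewrite ?cLD ?cGD ?(cL_Ly _ _ _ _ erefl) ?(cG_Ly _ _ _ _ erefl) ?cLD ?cGD; ring.
Qed.

Lemma eq_shift (i j n : int) : (j == n - i) = (i + j == n).
Proof. by rewrite eq_sym subr_eq addrC. Qed.

Lemma brLL i j : br (L i) (L j) = (i - j)%:~R *: L (i + j).
Proof.
apply: S_ext => n;
  rewrite ?(cL_Ly _ _ _ _ erefl) ?(cG_Ly _ _ _ _ erefl) ?cLZ ?cGZ ?cLL ?cGL ?mulr0 ?mul0r //.
by rewrite eq_shift; case: eqP => [<-|_]; rewrite ?mulr1 ?mul1r ?mul0r ?mulr0 // addrAC subrr add0r.
Qed.
Lemma brLG i j : br (L i) (G j) = (i%:~R / 2 - j%:~R) *: G (i + j).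
Proof.
apply: S_ext => n;
  rewrite ?(cL_Ly _ _ _ _ erefl) ?(cG_Ly _ _ _ _ erefl) ?cLZ ?cGZ ?cLG ?cGG ?mulr0 ?mul0r //.
by rewrite eq_shift; case: eqP => [<-|_]; rewrite ?mulr1 ?mul1r ?mul0r ?mulr0 // addrAC subrr add0r.
Qed.
Lemma brGG i j : br (G i) (G j) = 2 *: L (i + j).
Proof.
apply: S_ext => n;
  rewrite ?(cL_Gy _ _ _ _ erefl) ?(cG_Gy _ _ _ _ erefl) ?cLZ ?cGZ ?cLL ?cGG ?cLG ?cGL
          ?mul0r ?mulr0 ?oppr0 //.
by rewrite eq_shift mulrC.
Qed.

Lemma two_neq0 : (2 : C) != 0. Proof. by rewrite pnatr_eq0. Qed.
Lemma mul2_eq0 (x : C) : x * 2 = 0 -> x = 0.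
Proof. by move/eqP; rewrite mulf_eq0 (negbTE two_neq0) orbF => /eqP. Qed.

(* Solving the coefficient identity given by the Leibniz rule for [L_0, x]. *)
Lemma solve_ad0 (x b u v : C) (m n : int) :
  u * x = b + x * v -> u = - m%:~R -> v = - n%:~R -> (n - m)%:~R * x = b.
Proof. by move=> e eu ev; rewrite -[b](addrK (x * v)) -e eu ev intrB; ring. Qed.

Lemma lincomb3 (a b c l1 r1 l2 r2 l3 r3 x : C) : l1 = r1 -> l2 = r2 -> l3 = r3 ->
  x = a * (l1 - r1) + b * (l2 - r2) + c * (l3 - r3) -> x = 0.
Proof. by move=> -> -> -> ->; rewrite !subrr !mulr0 !addr0. Qed.
Arguments lincomb3 a b c {l1 r1 l2 r2 l3 r3 x}.

Lemma eq_by_factor (f g l r : C) : g = 0 -> l - r = f * g -> l = r.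
Proof. by move=> -> /eqP; rewrite mulr0 subr_eq0 => /eqP. Qed.

Lemma sqrt_sign_trick (q c x y : C) : q != 0 -> c != 0 ->
  (forall a, a != 0 -> a ^+ 2 = q -> a * c * x = y) -> x = 0.
Proof.
move=> q0 c0 rel; set a := sqrtC q.
have a2 : a ^+ 2 = q := sqrtCK q.
have a0 : a != 0 by apply: contraNneq q0 => a0; rewrite -a2 a0 expr2 mul0r.
have e1 := rel a a0 a2.
have e2 : - a * c * x = y by apply: rel; rewrite ?oppr_eq0 ?sqrrN.
have : (a * c) * (2 * x) = 0 by rewrite -(subrr y) -{1}e1 -e2; ring.
by move/eqP; rewrite !mulf_eq0 (negbTE a0) (negbTE c0) (negbTE two_neq0) => /eqP.
Qed.

(* An identity t^2 a + t b = t^2 c + d for all t != 0 (it suffices that it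
   holds at t = 1, -1, 2) forces a = c. *)
Lemma quadratic_lead (a b c d : C) :
  (forall t, t != 0 -> t ^+ 2 * a + t * b = t ^+ 2 * c + d) -> a = c.
Proof.
move=> eq_t; have e1 := eq_t 1 (oner_neq0 C).
have e2 := eq_t (-1) ltac:(by rewrite oppr_eq0 oner_eq0).
have e3 := eq_t 2 two_neq0.
apply/eqP; rewrite -subr_eq0; apply/eqP.
by apply: (lincomb3 (-(1/2)) (1/6) (1/3) e1 e2 e3); field.
Qed.

Lemma half_int_neq0 (k : int) : k%:~R - 1 / 2 != 0 :> C.
Proof.
apply/eqP => H; have : ((2 * k)%:~R : C) = 1%:~R.
  by rewrite intrM (_ : k%:~R = 1 / 2); [field | apply/eqP; rewrite -subr_eq0 H].
by move/intr_inj; lia.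
Qed.

Lemma intr_sub_neq0 (k l : int) : k != l -> k%:~R - l%:~R != 0 :> C.
Proof. by rewrite -intrB intr_eq0 subr_eq0. Qed.

Lemma intr_mul_eq0 (k : int) (x : C) : k != 0 -> k%:~R * x = 0 -> x = 0.
Proof. by move=> k0 /eqP; rewrite mulf_eq0 intr_eq0 (negbTE k0) => /eqP. Qed.

Lemma fam_bound (p : Fam) : exists B : nat, forall j : int, (B < `|j|)%N -> p@_j = 0.
Proof.
exists (\max_(x <- msupp p) `|x|%N) => j Hj; apply: mcoeff_outdom; apply/negP => Hin.
have := @leq_bigmax_seq _ _ xpredT (fun x : int => `|x|%N) _ Hin isT.
by rewrite leqNgt Hj.
Qed.

Lemma vanish_from_infinity (r : int -> C) (c : int) (B : nat) :
  (forall j : int, (B < `|j|)%N -> r j = 0) ->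
  (forall j, c <= j -> r (j + 1) = 0 -> r j = 0) -> forall j, c <= j -> r j = 0.
Proof.
move=> rB step.
suff H (k : nat) j : c <= j -> B%:Z < j + k%:Z -> r j = 0.
  by move=> j cj; apply: (H (B + `|j|).+1 j cj); lia.
elim: k j => [|k IH] j cj Hk; first by apply: rB; lia.
by apply: (step j); [|apply: IH]; lia.
Qed.

Lemma is_linear0 (f : S -> S) : is_linear f -> f 0 = 0.
Proof.
move=> lin; have h := lin 1 0 0; rewrite !scale1r addr0 in h.
by apply: (addrI (f 0)); rewrite addr0 -h.
Qed.
Lemma is_linearD (f : S -> S) : is_linear f -> forall u v, f (u + v) = f u + f v.
Proof. by move=> lin u v; have := lin 1 u v; rewrite !scale1r. Qed.
Lemma is_linearZ (f : S -> S) : is_linear f -> forall k u, f (k *: u) = k *: f u.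
Proof. by move=> lin k u; rewrite -[k *: u]addr0 lin is_linear0 // addr0. Qed.

(* A homogeneous derivation E of parity p applied to [G_0, G_0] = 2 L_0. *)
Lemma homog_derivation_G0G0 p (E : S -> S) : is_homog_derivation p E ->
  cL 0 (E (L 0)) = (1 + (-1) ^+ p) * cG 0 (E (G 0)).
Proof.
case=> lin _ Leib; have := congr1 (cL 0) (Leib true true (G 0) (G 0) erefl erefl).
rewrite -br_def brGG is_linearZ // cLZ cLD cLZ andbT.
rewrite (cL_Gy _ _ _ _ erefl) (cL_yG _ _ _ _ erefl) => eq2.
by apply: (mulfI two_neq0); rewrite eq2; ring.
Qed.

Section Derivation.
Variable D : S -> S.
Hypothesis HD : is_derivation D.

Lemma derivation_linear : is_linear D.
Proof.
case: HD => D0 [D1 [[lin0 _ _] [lin1 _ _] Dsum]] k u v.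
by rewrite !Dsum lin0 lin1 scalerDr addrACA.
Qed.

Lemma derD u v : D (u + v) = D u + D v.
Proof. by apply: is_linearD; apply: derivation_linear. Qed.
Lemma derZ k u : D (k *: u) = k *: D u.
Proof. by apply: is_linearZ; apply: derivation_linear. Qed.

(* Both homogeneous parts of D satisfy the unsigned Leibniz rule when the
   left argument is even, hence so does D itself. *)
Lemma Leibniz_LL i j : D (br (L i) (L j)) = br (D (L i)) (L j) + br (L i) (D (L j)).
Proof.
case: HD => D0 [D1 [[_ _ Leib0] [_ _ Leib1] Dsum]]; rewrite -br_def in Leib0 Leib1.
rewrite !Dsum (Leib0 false false) // (Leib1 false false) // andbF expr0 !scale1r.
by rewrite brDl_L brDr_L addrACA.
Qed.
Lemma Leibniz_LG i j : D (br (L i) (G j)) = br (D (L i)) (G j) + br (L i) (D (G j)).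
Proof.
case: HD => D0 [D1 [[_ _ Leib0] [_ _ Leib1] Dsum]]; rewrite -br_def in Leib0 Leib1.
rewrite !Dsum (Leib0 false true) // (Leib1 false true) // andbF expr0 !scale1r.
by rewrite brDl_G brDr_L addrACA.
Qed.

Lemma coef_Leibniz_LL_L k i j n : i + j = k ->
  (i - j)%:~R * cL n (D (L k)) = cL n (br (D (L i)) (L j)) + cL n (br (L i) (D (L j))).
Proof. by move<-; rewrite -cLD -Leibniz_LL brLL derZ cLZ. Qed.
Lemma coef_Leibniz_LL_G k i j n : i + j = k ->
  (i - j)%:~R * cG n (D (L k)) = cG n (br (D (L i)) (L j)) + cG n (br (L i) (D (L j))).
Proof. by move<-; rewrite -cGD -Leibniz_LL brLL derZ cGZ. Qed.
Lemma coef_Leibniz_LG_L k i j n : i + j = k ->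
  (i%:~R / 2 - j%:~R) * cL n (D (G k)) =
  cL n (br (D (L i)) (G j)) + cL n (br (L i) (D (G j))).
Proof. by move<-; rewrite -cLD -Leibniz_LG brLG derZ cLZ. Qed.
Lemma coef_Leibniz_LG_G k i j n : i + j = k ->
  (i%:~R / 2 - j%:~R) * cG n (D (G k)) =
  cG n (br (D (L i)) (G j)) + cG n (br (L i) (D (G j))).
Proof. by move<-; rewrite -cGD -Leibniz_LG brLG derZ cGZ. Qed.

(* Since ad L_0 acts on L_n, G_n by -n, the coefficients of D(L_m), D(G_m)
   away from degree m are determined by A = D(L_0); here k = n - m. *)
Lemma grade_LL m n k : n - m = k ->
  k%:~R * cL n (D (L m)) = cL k (D (L 0)) * (k - m)%:~R.
Proof.
move=> nmk; have := coef_Leibniz_LL_L m 0 m n (add0r m).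
rewrite (cL_yL _ _ _ _ nmk) (cL_Ly _ _ _ _ (subr0 n)) -nmk.
by move/solve_ad0; apply; rewrite intrB; ring.
Qed.
Lemma grade_GL m n k : n - m = k ->
  k%:~R * cG n (D (L m)) = - (cG k (D (L 0)) * (m%:~R / 2 - k%:~R)).
Proof.
move=> nmk; have := coef_Leibniz_LL_G m 0 m n (add0r m).
rewrite (cG_yL _ _ _ _ nmk) (cG_Ly _ _ _ _ (subr0 n)) -nmk.
by move/solve_ad0; apply; rewrite ?intrB; ring.
Qed.
Lemma grade_LG m n k : n - m = k -> k%:~R * cL n (D (G m)) = cG k (D (L 0)) * 2.
Proof.
move=> nmk; have := coef_Leibniz_LG_L m 0 m n (add0r m).
rewrite (cL_yG _ _ _ _ nmk) (cL_Ly _ _ _ _ (subr0 n)) -nmk.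
by move/solve_ad0; apply; rewrite ?intrB; ring.
Qed.
Lemma grade_GG m n k : n - m = k ->
  k%:~R * cG n (D (G m)) = cL k (D (L 0)) * (k%:~R / 2 - m%:~R).
Proof.
move=> nmk; have := coef_Leibniz_LG_G m 0 m n (add0r m).
rewrite (cG_yG _ _ _ _ nmk) (cG_Ly _ _ _ _ (subr0 n)) -nmk.
by move/solve_ad0; apply; rewrite ?intrB; ring.
Qed.

(* Both j cL_j(D G_0) and j cL_(j+1)(D G_1) equal 2 cG_j(D L_0). *)
Lemma grade_G0_G1 j : j%:~R * cL j (D (G 0)) = j%:~R * cL (j + 1) (D (G 1)).
Proof. by rewrite (grade_LG 0 j j (subr0 j)) (grade_LG 1 (j + 1) j (addrK 1 j)). Qed.

Lemma coefL0_DL0 : cL 0 (D (L 0)) = 0.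
Proof.
have := grade_LL 1 1 0 erefl; rewrite mul0r => /esym/eqP.
by rewrite mulf_eq0 intr_eq0 => /orP [/eqP|].
Qed.
Lemma coefG0_DL0 : cG 0 (D (L 0)) = 0.
Proof.
by have := grade_LG 0 0 0 erefl; rewrite mul0r => /esym/mul2_eq0.
Qed.

(* The G_0-coefficient of D(G_0) vanishes: for the odd part because D_1(G_0)
   is even, for the even part by [G_0, G_0] = 2 L_0 and [coefL0_DL0]. *)
Lemma coefG0_DG0 : cG 0 (D (G 0)) = 0.
Proof.
have := coefL0_DL0; case: HD => D0 [D1 [hd0 hd1 Dsum]].
have odd_part : cG 0 (D1 (G 0)) = 0.
  by case: hd1 => _ hom1 _; rewrite /cG (hom1 true (G 0) erefl) mcoeff0.
rewrite !Dsum cLD cGD (homog_derivation_G0G0 _ _ hd0) (homog_derivation_G0G0 _ _ hd1).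
rewrite odd_part /= expr0 mulr0 !addr0 => /eqP.
by rewrite mulf_eq0 -mulr2n pnatr_eq0 => /eqP.
Qed.

Lemma coefL0_DG0 : cL 0 (D (G 0)) = -4 * cG 1 (D (L 1)).
Proof.
have Ha := coef_Leibniz_LL_G 0 1 (-1) 0 erefl.
have Hb := coef_Leibniz_LG_L (-1) (-1) 0 (-1) erefl.
have Hc := coef_Leibniz_LG_L 0 1 (-1) 0 erefl.
rewrite coefG0_DL0 (cG_yL _ (-1) 0 1 erefl) (cG_Ly 1 _ 0 (-1) erefl) in Ha.
rewrite (cL_yG _ 0 (-1) (-1) erefl) (cL_Ly (-1) _ (-1) 0 erefl) in Hb.
rewrite (cL_yG _ (-1) 0 1 erefl) (cL_Ly 1 _ 0 (-1) erefl) in Hc.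
apply/eqP; rewrite -subr_eq0; apply/eqP.
by apply: (lincomb3 (-(32/15)) (8/5) (-(2/5)) Ha Hb Hc); field.
Qed.

(* The Leibniz rule for [L_1, G_0] = G_1/2 in degree 1, for both parts. *)
Lemma coefL1_DG1 : cL 1 (D (G 1)) = cL 0 (D (G 0)).
Proof.
have := coef_Leibniz_LG_L 1 1 0 1 erefl.
rewrite (cL_yG _ 0 1 1 erefl) (cL_Ly 1 _ 1 0 erefl) => e.
have -> : cL 1 (D (G 1)) = 2 * ((1%:~R / 2 - 0%:~R) * cL 1 (D (G 1))) by field.
by rewrite e coefL0_DG0; field.
Qed.

Lemma coefG1_DG1 : cG 1 (D (G 1)) = cL 1 (D (L 1)).
Proof.
have := coef_Leibniz_LG_G 1 1 0 1 erefl.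
rewrite (cG_yG _ 0 1 1 erefl) (cG_Ly 1 _ 1 0 erefl) coefG0_DG0 => e.
have -> : cG 1 (D (G 1)) = 2 * ((1%:~R / 2 - 0%:~R) * cG 1 (D (G 1))) by field.
by rewrite e; field.
Qed.

(* If t D(G_1) + D(G_0) has no L_j-component for j < 0 and j > 3, then the
   finitely supported family (cG j (D (L 0)))_j vanishes at -1 and at 3:
   the grading relations propagate vanishing inwards from infinity. *)
Lemma coefG_DL0_vanish (t : C) : t != 0 ->
  (forall j : int, (j < 0) || (3 < j) -> t * cL j (D (G 1)) + cL j (D (G 0)) = 0) ->
  cG (-1) (D (L 0)) = 0 /\ cG 3 (D (L 0)) = 0.
Proof.
move=> t0 outer; have [B HB] := fam_bound (D (L 0)).2.
have grade0 j : j%:~R * cL j (D (G 0)) = cG j (D (L 0)) * 2 := grade_LG 0 j j (subr0 j).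
have grade1 j k : j - 1 = k -> k%:~R * cL j (D (G 1)) = cG k (D (L 0)) * 2 := grade_LG 1 j k.
split.
  have := @vanish_from_infinity (fun j => cG (- j) (D (L 0))) 1 B _ _ 1 isT.
  apply=> [j Bj|j j1 /= next]; first by apply: HB; rewrite abszN.
  have DG1 : cL (- j) (D (G 1)) = 0.
    apply: (@intr_mul_eq0 (- (j + 1))); first lia.
    by rewrite (grade1 _ (- (j + 1))) ?next ?mul0r //; lia.
  have DG0 : cL (- j) (D (G 0)) = 0.
    by have := outer (- j); rewrite DG1 mulr0 add0r; apply; lia.
  by apply: mul2_eq0; rewrite -grade0 DG0 mulr0.
have := @vanish_from_infinity (fun j => cG j (D (L 0))) 3 B HB _ 3 isT.
apply=> j j3 /= next.
have DG0 : cL (j + 1) (D (G 0)) = 0.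
  by apply: (@intr_mul_eq0 (j + 1)); [lia | rewrite grade0 next mul0r].
have DG1 : cL (j + 1) (D (G 1)) = 0.
  have /eqP := outer (j + 1) ltac:(lia).
  by rewrite DG0 addr0 mulf_eq0 (negbTE t0) => /eqP.
by apply: mul2_eq0; rewrite -(grade1 (j + 1)) ?DG1 ?mulr0 // addrK.
Qed.
End Derivation.

Section LocalDerivation.
Variable Delta : S -> S.
Hypothesis HL : is_local_derivation Delta.
Hypothesis Delta_L0 : Delta (L 0) = 0.
Hypothesis Delta_L1 : Delta (L 1) = 0.

Lemma local_witness (a : C) (x y : S) :
  exists2 D, is_derivation D & a *: Delta x + Delta y = a *: D x + D y.
Proof.
case: HL => lin /(_ (a *: x + y)) [D [HD e]].
by rewrite lin (derD _ HD) (derZ _ HD) in e; exists D.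
Qed.

(* Delta(G_0) is concentrated in degree 0: test Delta on a L_0 + G_0 with
   a^2 = 1/m, on which Delta equals Delta(G_0). *)
Lemma DeltaG0_offdiag m : m != 0 -> cL m (Delta (G 0)) = 0 /\ cG m (Delta (G 0)) = 0.
Proof.
move=> m0; have mz : m%:~R != 0 :> C by rewrite intr_eq0.
have rel a : a != 0 -> a ^+ 2 = m%:~R^-1 ->
    a * (m%:~R / 2) * cL m (Delta (G 0)) = cG m (Delta (G 0)).
  move=> _ a2; have [D HD e] := local_witness a (L 0) (G 0).
  rewrite Delta_L0 scaler0 add0r in e; rewrite e cL_lincomb cG_lincomb.
  rewrite -[cL m (D (G 0))](mulKf mz) (grade_LG D HD 0 m m (subr0 m)).
  rewrite -[cG m (D (G 0))](mulKf mz) (grade_GG D HD 0 m m (subr0 m)).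
  apply: (eq_by_factor (cL m (D (L 0)) / 2) (a ^+ 2 * m%:~R - 1)).
    by rewrite a2 mulVf ?subrr.
  by field.
have cL_vanish : cL m (Delta (G 0)) = 0.
  apply: (sqrt_sign_trick _ _ _ _ _ _ rel); first by rewrite invr_eq0.
  by rewrite mulf_eq0 negb_or mz invr_eq0 two_neq0.
split=> //; have a2 := sqrtCK (m%:~R^-1 : C).
by rewrite -(rel _ _ a2) ?cL_vanish ?mulr0 // sqrtC_eq0 invr_eq0.
Qed.

Lemma coefG0_DeltaG0 : cG 0 (Delta (G 0)) = 0.
Proof. by case: HL => _ /(_ (G 0)) [D [HD ->]]; exact: coefG0_DG0. Qed.

(* Delta(G_1) has no L_j-component for j <> 1, 2, 3: test Delta on a L_1 + G_1
   with a^2 (k - 1)(k - 1/2) = k - 2, where k = j - 1. *)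
Lemma coefL_DeltaG1 j : j != 1 -> j != 2 -> j != 3 -> cL j (Delta (G 1)) = 0.
Proof.
move=> j1 j2 j3; have [k jk] : exists k, j - 1 = k by exists (j - 1).
have kz : k%:~R != 0 :> C by rewrite intr_eq0; lia.
have k1 : k%:~R - 1 != 0 :> C by apply: (@intr_sub_neq0 k 1); lia.
have k2 : k%:~R - 2 != 0 :> C by apply: (@intr_sub_neq0 k 2); lia.
have rel a : a != 0 -> a ^+ 2 = (k%:~R - 2) / ((k%:~R - 1) * (k%:~R - 1 / 2)) ->
    a * (k%:~R - 1 / 2) * cL j (Delta (G 1)) = 2 * cG j (Delta (G 1)).
  move=> _ a2; have [D HD e] := local_witness a (L 1) (G 1).
  rewrite Delta_L1 scaler0 add0r in e; rewrite e cL_lincomb cG_lincomb.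
  rewrite -[cL j (D (L 1))](mulKf kz) (grade_LL D HD 1 j k jk).
  rewrite -[cG j (D (L 1))](mulKf kz) (grade_GL D HD 1 j k jk).
  rewrite -[cL j (D (G 1))](mulKf kz) (grade_LG D HD 1 j k jk).
  rewrite -[cG j (D (G 1))](mulKf kz) (grade_GG D HD 1 j k jk).
  apply: (eq_by_factor (cL k (D (L 0)) / k%:~R)
                       (a ^+ 2 * ((k%:~R - 1) * (k%:~R - 1 / 2)) - (k%:~R - 2))).
    by rewrite a2 divfK ?subrr // mulf_neq0 ?half_int_neq0.
  by field.
apply: (sqrt_sign_trick _ _ _ _ _ (half_int_neq0 k) rel).
by rewrite mulf_neq0 ?invr_neq0 ?mulf_neq0 ?half_int_neq0.
Qed.

(* Delta(G_1) has no L_1-component: test Delta on t G_1 + L_1 with t^2 = -1/4,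
   using the degree-1 relations between D(G_1) and D(L_1). *)
Lemma coefL1_DeltaG1 : cL 1 (Delta (G 1)) = 0.
Proof.
have rel t : t != 0 -> t ^+ 2 = - (1 / 4) -> t * 1 * cL 1 (Delta (G 1)) = cG 1 (Delta (G 1)).
  move=> t0 t2; have [D HD e] := local_witness t (G 1) (L 1).
  have eL := congr1 (cL 1) e; have eG := congr1 (cG 1) e.
  rewrite !cL_lincomb Delta_L1 cL0 addr0 in eL.
  rewrite !cG_lincomb Delta_L1 cG0 addr0 in eG.
  apply: (mulfI t0); rewrite mulr1 eL eG.
  rewrite (coefL1_DG1 D HD) (coefL0_DG0 D HD) (coefG1_DG1 D HD).
  apply: (eq_by_factor (-4 * cG 1 (D (L 1))) (t ^+ 2 + 1 / 4)).
    by rewrite t2 addrC subrr.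
  by field.
apply: (sqrt_sign_trick _ _ _ _ _ (oner_neq0 C) rel).
by rewrite oppr_eq0 mulf_neq0 ?oner_neq0 // invr_eq0 pnatr_eq0.
Qed.

(* Testing Delta on t G_1 + G_0 gives an identity quadratic in t != 0: the
   tail lemma [coefG_DL0_vanish] and the grading relations of the witness
   derivation reduce everything to degrees 0..3. *)
Lemma DeltaG_quadratic t : t != 0 ->
  t ^+ 2 * cL 0 (Delta (G 0)) + t * cL 2 (Delta (G 1)) =
  t ^+ 2 * cL 1 (Delta (G 1)) + cL 3 (Delta (G 1)).
Proof.
move=> t0; have [D HD e] := local_witness t (G 1) (G 0).
have EQ j : t * cL j (D (G 1)) + cL j (D (G 0)) =
            t * cL j (Delta (G 1)) + cL j (Delta (G 0)).
  by have := congr1 (cL j) e; rewrite !cL_lincomb => ->.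
have offdiag j : j != 0 -> cL j (Delta (G 0)) = 0 := fun j0 => (DeltaG0_offdiag j j0).1.
have outer j : (j < 0) || (3 < j) -> t * cL j (D (G 1)) + cL j (D (G 0)) = 0.
  by move=> jout; rewrite EQ coefL_DeltaG1 ?offdiag ?mulr0 ?addr0 //; lia.
have [Am1 A3] := coefG_DL0_vanish D HD t t0 outer.
have D1_0 : cL 0 (D (G 1)) = 0.
  by apply: (@intr_mul_eq0 (-1)) => //; rewrite (grade_LG D HD 1 0 (-1)) // Am1 mul0r.
have D0_3 : cL 3 (D (G 0)) = 0.
  by apply: (@intr_mul_eq0 3) => //; rewrite (grade_LG D HD 0 3 3) // A3 mul0r.
have D0_1 : cL 1 (D (G 0)) = cL 2 (D (G 1)).
  by apply: (mulfI (_ : 1%:~R != 0 :> C)); [rewrite intr_eq0 | exact: grade_G0_G1 D HD 1].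
have D0_2 : cL 2 (D (G 0)) = cL 3 (D (G 1)).
  by apply: (mulfI (_ : 2%:~R != 0 :> C)); [rewrite intr_eq0 | exact: grade_G0_G1 D HD 2].
have E0 := EQ 0; rewrite D1_0 coefL_DeltaG1 // !mulr0 !add0r in E0.
have E1 := EQ 1; rewrite offdiag // addr0 (coefL1_DG1 D HD) in E1.
have E2 := EQ 2; rewrite offdiag // addr0 -D0_1 D0_2 in E2.
have E3 := EQ 3; rewrite offdiag // D0_3 !addr0 in E3; move/(mulfI t0): E3 => E3.
by rewrite -E0 -E3 [in t ^+ 2 * cL 1 _]expr2 -mulrA -E1 -E2; ring.
Qed.
End LocalDerivation.

Theorem lemma4p1 (Delta : S -> S) :
  is_local_derivation Delta -> Delta (L 0) = 0 -> Delta (L 1) = 0 ->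
  Delta (G 0) = 0.
Proof.
move=> HL H0 H1; apply: S_ext => n; rewrite ?cL0 ?cG0.
  have [->|n0] := eqVneq n 0; last exact: (DeltaG0_offdiag _ HL H0 _ n0).1.
  rewrite (quadratic_lead _ _ _ _ (DeltaG_quadratic _ HL H0 H1)).
  exact: coefL1_DeltaG1 HL H1.
have [->|n0] := eqVneq n 0; last exact: (DeltaG0_offdiag _ HL H0 _ n0).2.
exact: coefG0_DeltaG0 HL.
Qed.
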